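(* For every $\varepsilon>0$ there exists $\delta>0$, depending only on $\varepsilon$, such that the following holds for all sufficiently large $N_0$. If $G$ is a bichromatic graph whose underlying graph is the complete bipartite graph $K_{N_0,N_0}$ and $G$ is $\varepsilon$-color-balanced, then at least one of the left vertex-pair incidence graph $H_L$ and the right vertex-pair incidence graph $H_R$ of $G$ has at least $\delta N_0^3$ edges.
   Context: A bichromatic graph is a triple $G=(V,R,B)$ with $R,B\subseteq\binom{V}{2}$, $R\cap B=\emptyset$ (red and blue edges); its underlying graph is $(V,R\cup B)$. $d_R(G)=|R|/(|R|+|B|)$, and $G$ is $\varepsilon$-color-balanced if $\varepsilon\le d_R(G)\le 1-\varepsilon$. For a bipartite bichromatic graph $G$ with bipartition $V=V_1\sqcup V_2$, the left vertex-pair incidence graph $H_L$ is the bipartite graph with vertex set $V_1\sqcup\binom{V_2}{2}$ in which $u\in V_1$ is adjacent to $\{v_1,v_2\}\in\binom{V_2}{2}$ if and only if $uv_1$ and $uv_2$ are both edges of $G$ and they have different colours. The right vertex-pair incidence graph $H_R$ is defined in the same way with the roles of $V_1$ and $V_2$ swapped (vertex set $V_2\sqcup\binom{V_1}{2}$). *)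

From mathcomp Require Import all_boot all_order all_algebra.
Set Implicit Arguments. Unset Strict Implicit. Unset Printing Implicit Defensive.
Import Order.TTheory GRing.Theory Num.Theory.

(* A bichromatic graph whose underlying graph is the complete bipartite graph
   K_{N,N}, with bipartition V1 = 'I_N (left) and V2 = 'I_N (right):
   every pair (u,v) in V1 x V2 is an edge, coloured red iff [col u v] = true,
   blue otherwise. *)
Definition bicol_KNN (N : nat) := 'I_N -> 'I_N -> bool.

Definition num_red N (col : bicol_KNN N) : nat :=
  #|[set uv : 'I_N * 'I_N | col uv.1 uv.2]|.

(* red density d_R(G) = |R| / (|R| + |B|) ; here |R| + |B| = N^2 *)
Definition red_density (R : numFieldType) N (col : bicol_KNN N) : R :=
  ((num_red col)%:R / (N * N)%:R)%R.

Definition color_balanced (R : numFieldType) (eps : R) N (col : bicol_KNN N) :=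
  (eps <= red_density R col <= 1 - eps)%R.

(* Edges of the left vertex-pair incidence graph H_L: pairs (u, {v1,v2}),
   u in V1, {v1,v2} an unordered pair of distinct vertices of V2 (encoded as
   v1 < v2), such that uv1 and uv2 have different colours. *)
Definition HL_edges N (col : bicol_KNN N) : {set 'I_N * ('I_N * 'I_N)} :=
  [set t : 'I_N * ('I_N * 'I_N) | (t.2.1 < t.2.2)%N && (col t.1 t.2.1 != col t.1 t.2.2)].

Definition HR_edges N (col : bicol_KNN N) : {set 'I_N * ('I_N * 'I_N)} :=
  [set t : 'I_N * ('I_N * 'I_N) | (t.2.1 < t.2.2)%N && (col t.2.1 t.1 != col t.2.2 t.1)].

From mathcomp Require Import all_boot all_order all_algebra.
From mathcomp Require Import lra.
Set Implicit Arguments. Unset Strict Implicit. Unset Printing Implicit Defensive.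
Import Order.TTheory GRing.Theory Num.Theory.

(* Double counting: for a red edge uv and a blue edge u'v', the edge uv' has a
   colour different from uv (a bichromatic pair {v, v'} at u, an edge of H_L)
   or from u'v' (a bichromatic pair {u, u'} at v', an edge of H_R).  A given
   edge of H_L or H_R arises in this way from at most 2N such quadruples, so
   |R| |B| <= 2N (|H_L| + |H_R|), while color balance gives |R| |B| >= eps^2 N^4;
   hence one of H_L, H_R has at least eps^2 N^3 / 4 edges. *)

Lemma card_set_sum (T : finType) (P : pred T) : #|[set x | P x]| = \sum_x P x.
Proof. by rewrite -sum1dep_card big_mkcond; apply: eq_bigr => x _; case: (P x). Qed.

Section DoubleCounting.

Variables (A B : finType) (col : A -> B -> bool).

Lemma sum_red_blue :
  \sum_u \sum_v col u v + \sum_u \sum_v ~~ col u v = #|A| * #|B|.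
Proof.
rewrite -big_split -sum_nat_const; apply: eq_bigr => u _.
rewrite -big_split -[#|B|]muln1 -sum_nat_const; apply: eq_bigr => v _.
by case: (col u v).
Qed.

Lemma red_blue_le_mismatches :
  (\sum_u \sum_v col u v) * (\sum_u \sum_v ~~ col u v) <=
  #|A| * \sum_u \sum_v \sum_v' (col u v != col u v') +
  #|B| * \sum_v \sum_u \sum_u' (col u v != col u' v).
Proof.
have left_mismatches : #|A| * \sum_u \sum_v \sum_v' (col u v != col u v') =
    \sum_u \sum_v \sum_(u' : A) \sum_v' (col u v != col u v').
  rewrite big_distrr; apply: eq_bigr => u _; rewrite big_distrr; apply: eq_bigr => v _.
  by rewrite sum_nat_const.
have right_mismatches : #|B| * \sum_v \sum_u \sum_u' (col u v != col u' v) =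
    \sum_u \sum_(v : B) \sum_u' \sum_v' (col u v' != col u' v').
  symmetry; transitivity (\sum_u #|B| * \sum_u' \sum_v' (col u v' != col u' v')).
    by apply: eq_bigr => u _; rewrite sum_nat_const.
  rewrite -big_distrr /=; congr (_ * _).
  by rewrite [RHS]exchange_big; apply: eq_bigr => u _; rewrite exchange_big.
rewrite left_mismatches right_mismatches -!big_split big_distrl /=.
apply: leq_sum => u _; rewrite -big_split big_distrl /=; apply: leq_sum => v _.
rewrite big_distrr -big_split /=; apply: leq_sum => u' _.
rewrite big_distrr -big_split /=; apply: leq_sum => v' _.
by case: (col u v); case: (col u v'); case: (col u' v').
Qed.

End DoubleCounting.

Lemma sum_neq_pairs N (f : 'I_N -> bool) :
  \sum_i \sum_j (f i != f j) = 2 * \sum_(i < N) \sum_(j < N) ((i < j) && (f i != f j)).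
Proof.
rewrite mul2n -addnn [X in _ + X]exchange_big -big_split /=; apply: eq_bigr => i _.
rewrite -big_split /=; apply: eq_bigr => j _; rewrite [f j == _]eq_sym.
by case: ltngtP => [_|_|/val_inj ->] /=; rewrite ?addn0 ?eqxx.
Qed.

Section CompleteBipartite.

Variables (N : nat) (col : bicol_KNN N).

Lemma num_redE : num_red col = \sum_u \sum_v col u v.
Proof. by rewrite /num_red card_set_sum -(pair_bigA _ (fun u v => col u v : nat)). Qed.

Lemma num_blueE : N * N - num_red col = \sum_u \sum_v ~~ col u v.
Proof.
by have := sum_red_blue col; rewrite !card_ord num_redE => <-; rewrite addKn.
Qed.

Lemma num_red_le : num_red col <= N * N.
Proof. by apply: leq_trans (max_card _) _; rewrite card_prod card_ord. Qed.

Lemma double_card_HL_edges :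
  2 * #|HL_edges col| = \sum_u \sum_v \sum_v' (col u v != col u v').
Proof.
rewrite card_set_sum -(pair_bigA _ (fun u (p : 'I_N * 'I_N) =>
  ((p.1 < p.2) && (col u p.1 != col u p.2)) : nat)) big_distrr.
apply: eq_bigr => u _.
by rewrite -(pair_bigA _ (fun i j : 'I_N => ((i < j) && (col u i != col u j)) : nat))
  sum_neq_pairs.
Qed.

Lemma double_card_HR_edges :
  2 * #|HR_edges col| = \sum_v \sum_u \sum_u' (col u v != col u' v).
Proof.
rewrite card_set_sum -(pair_bigA _ (fun v (p : 'I_N * 'I_N) =>
  ((p.1 < p.2) && (col p.1 v != col p.2 v)) : nat)) big_distrr.
apply: eq_bigr => v _.
by rewrite -(pair_bigA _ (fun i j : 'I_N => ((i < j) && (col i v != col j v)) : nat))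
  (sum_neq_pairs (col^~ v)).
Qed.

Lemma red_blue_le_HL_HR :
  num_red col * (N * N - num_red col) <= 2 * N * (#|HL_edges col| + #|HR_edges col|).
Proof.
rewrite num_blueE num_redE mulnDr -!mulnA ![2 * (N * _)]mulnCA.
rewrite double_card_HL_edges double_card_HR_edges.
by have := red_blue_le_mismatches col; rewrite !card_ord.
Qed.

End CompleteBipartite.

Local Open Scope ring_scope.

Lemma color_balanced_N_gt0 (R : realFieldType) (eps : R) N (col : bicol_KNN N) :
  0 < eps -> color_balanced eps col -> (0 < N)%N.
Proof.
(* for N = 0 the red density is 0 / 0 = 0 < eps *)
move=> eps_gt0 /andP[+ _]; case: N col => // col.
by rewrite /red_density muln0 invr0 mulr0 => /(lt_le_trans eps_gt0); rewrite ltxx.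
Qed.

Lemma color_balanced_red_blue (R : realFieldType) (eps : R) N (col : bicol_KNN N) :
  0 < eps -> color_balanced eps col ->
  (eps * (N * N)%:R) ^+ 2 <= (num_red col * (N * N - num_red col))%:R.
Proof.
move=> eps_gt0 bal; have N_gt0 := color_balanced_N_gt0 eps_gt0 bal.
move: bal => /andP[lo hi].
have NN_gt0 : 0 < (N * N)%:R :> R by rewrite ltr0n muln_gt0 N_gt0.
rewrite /red_density ler_pdivlMr // in lo; rewrite /red_density ler_pdivrMr // in hi.
have eps_NN_ge0 : 0 <= eps * (N * N)%:R by rewrite mulr_ge0 // ltW.
by rewrite [in X in _ <= X]natrM natrB ?num_red_le // expr2; apply: ler_pM => //; lra.
Qed.

Theorem lemma4p2 (R : realFieldType) (eps : R) (heps : 0 < eps) :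
  exists2 delta : R, 0 < delta &
    exists N1 : nat, forall (N0 : nat) (col : bicol_KNN N0),
      (N1 <= N0)%N -> color_balanced eps col ->
      delta * (N0 ^ 3)%:R <= #|HL_edges col|%:R \/
      delta * (N0 ^ 3)%:R <= #|HR_edges col|%:R.
Proof.
exists (eps ^+ 2 / 4); first by rewrite divr_gt0 // exprn_gt0.
exists 0%N => N col _ bal.
have N_gt0 : 0 < N%:R :> R by rewrite ltr0n (color_balanced_N_gt0 heps bal).
have bound : eps ^+ 2 * (N ^ 3)%:R <= 2 * (#|HL_edges col| + #|HR_edges col|)%:R.
  move: (red_blue_le_HL_HR col); rewrite -(ler_nat R).
  move=> /(le_trans (color_balanced_red_blue heps bal)) key.
  by rewrite -(ler_pM2l N_gt0); move: key; rewrite !natrM; lra.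
rewrite natrD in bound.
by have [HR_le_HL|HL_lt_HR] := lerP (#|HR_edges col|%:R : R) #|HL_edges col|%:R;
  [left|right]; lra.
Qed.
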